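(* Every non-abelian free group of finite rank has exponential automorphic growth.
   Context: For a finitely generated group $G$ with finite generating set $\Sigma$, the automorphic growth function sends $n$ to the number of $\operatorname{Aut}(G)$-orbits of $G$ containing an element of word length at most $n$ with respect to $\Sigma$. For non-decreasing non-zero $f,g\colon\mathbb{N}\to\mathbb{N}$ write $f\preccurlyeq g$ if there is $\lambda\in\mathbb{N}\setminus\{0\}$ with $f(n)\le\lambda g(\lambda n+\lambda)+\lambda$ for all $n$, and $f\sim g$ if $f\preccurlyeq g$ and $g\preccurlyeq f$. Exponential automorphic growth means the automorphic growth function is $\sim$-equivalent to $n\mapsto 2^n$; this is independent of the generating set. *)

From mathcomp Require Import all_boot.
Set Implicit Arguments. Unset Strict Implicit. Unset Printing Implicit Defensive.

(* A letter (i, b) stands for the generator x_i if b = false and x_i^-1 if b = true. *)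
Definition letter := (nat * bool)%type.

Definition inv_letter (l : letter) : letter := (l.1, ~~ l.2).

Fixpoint reducedb (w : seq letter) : bool :=
  match w with
  | l :: ((l' :: _) as w') => (l' != inv_letter l) && reducedb w'
  | _ => true
  end.

Definition valid (r : nat) (w : seq letter) : bool :=
  reducedb w && all (fun l => l.1 < r) w.

Definition cons_red (l : letter) (w : seq letter) : seq letter :=
  match w with
  | l' :: w' => if l' == inv_letter l then w' else l :: w
  | [::] => [:: l]
  end.

Definition reduce (w : seq letter) : seq letter := foldr cons_red [::] w.

Definition FG (r : nat) := {w : seq letter | valid r w}.

Definition fg_one (r : nat) : FG r := exist _ [::] (erefl true).

Definition fg_mul (r : nat) (x y : FG r) : FG r :=
  insubd (fg_one r) (reduce (val x ++ val y)).

Definition fg_gen (r : nat) (l : letter) : FG r := insubd (fg_one r) [:: l].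

Definition fg_eval (r : nat) (s : seq letter) : FG r :=
  foldr (fun l acc => fg_mul (fg_gen r l) acc) (fg_one r) s.

Definition in_ball (r n : nat) (x : FG r) : Prop :=
  exists s : seq letter, size s <= n /\ all (fun l => l.1 < r) s /\ fg_eval r s = x.

Definition is_aut (r : nat) (phi : FG r -> FG r) : Prop :=
  bijective phi /\ forall x y, phi (fg_mul x y) = fg_mul (phi x) (phi y).

Definition same_orbit (r : nat) (x y : FG r) : Prop :=
  exists phi, is_aut phi /\ phi x = y.

(* k is the number of Aut(F_r)-orbits meeting the ball of radius n:
   L is a list of pairwise inequivalent elements of the ball of length k
   such that every element of the ball lies in the orbit of one of them. *)
Definition orbit_count (r n k : nat) : Prop :=
  exists L : seq (FG r),
    [/\ size L = k,
        (forall x, x \in L -> in_ball n x),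
        (forall i j, i < j < k -> ~ same_orbit (nth (fg_one r) L i) (nth (fg_one r) L j))
      & (forall x, in_ball n x -> exists2 y, y \in L & same_orbit x y)].

Definition preceq (f g : nat -> nat) : Prop :=
  exists lam : nat, 0 < lam /\ forall n, f n <= lam * g (lam * n + lam) + lam.

Definition growth_equiv (f g : nat -> nat) : Prop := preceq f g /\ preceq g f.

Definition exp_aut_growth (r : nat) : Prop :=
  (exists f : nat -> nat, forall n, orbit_count r n (f n)) /\
  (forall f : nat -> nat, (forall n, orbit_count r n (f n)) ->
     growth_equiv f (fun n => 2 ^ n)).

From Stdlib Require Import ClassicalEpsilon.
From mathcomp Require Import all_boot all_algebra.
From mathcomp Require Import ring zify.
Set Implicit Arguments. Unset Strict Implicit. Unset Printing Implicit Defensive.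
Import GRing.Theory Num.Theory.

(* The ball of radius [n] has at most [(2r+1)^n] elements, which bounds the number of
   orbits from above.  For the lower bound ([r >= 2], since [F_0] and [F_1] are abelian),
   an automorphism-invariant of [x] is the set of its images under homomorphisms from
   [F_r] to the group of affine maps [z |-> 2^k z + d] with [d] a dyadic rational.
   Let [a], [b] be the first two generators, [H_[::] = 1], [H_(c :: s) = [a,b]^c a H_s a^-1]
   and [W_s = [a, H_s]].  If [a |-> alpha z + beta] and [[a,b] |-> z + tau], then [W_s] is
   sent to the translation by [(alpha - 1) P_s(alpha) tau], where [P_s] is the polynomial
   with coefficient sequence [s]; for [a |-> 2z], [b |-> z + 1] this is the binary number
   [P_s(2)].  Conversely, if [W_t] attains this translation for a palindrome [t] with
   [s], [t] of equal length and starting and ending with 1, then clearing powers of 2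
   gives [(2^m - 1) P_t(2^m) | P_s(2)] for some [m >= 1], and comparing sizes forces
   [m = 1] and [t = s].  The [2^n] palindromes of length [2n + 2] thus yield elements of
   length [O(n)] in pairwise distinct orbits. *)

Lemma reducedb_behead l w : reducedb (l :: w) -> reducedb w.
Proof. by case: w => // l' w /= /andP[]. Qed.

Lemma reducedb_cons_red l w : reducedb w -> reducedb (cons_red l w).
Proof.
case: w => [|l' w] //= red_w.
case: ifP => [_|/negbT ne] /=; last by rewrite ne red_w.
exact: reducedb_behead red_w.
Qed.

Lemma reducedb_reduce w : reducedb (reduce w).
Proof. by elim: w => //= l w; apply: reducedb_cons_red. Qed.

Lemma all_cons_red (P : pred letter) l w : P l -> all P w -> all P (cons_red l w).
Proof.
move=> Pl; case: w => [|l' w] /=; first by rewrite Pl.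
by case/andP=> Pl' Pw; case: ifP => _ //=; rewrite Pl Pl' Pw.
Qed.

Lemma all_reduce (P : pred letter) w : all P w -> all P (reduce w).
Proof. by elim: w => //= l w IHw /andP[Pl /IHw]; apply: all_cons_red. Qed.

Lemma valid_reduce r w : all (fun l => l.1 < r) w -> valid r (reduce w).
Proof. by move=> w_r; rewrite /valid reducedb_reduce all_reduce. Qed.

Lemma reduce_id w : reducedb w -> reduce w = w.
Proof.
elim: w => //= l w IHw red_lw; rewrite IHw ?(reducedb_behead red_lw) //.
by case: w red_lw {IHw} => [|l' w] //= /andP[ne _]; rewrite (negbTE ne).
Qed.

Lemma val_fg_mul r (x y : FG r) : val (fg_mul x y) = reduce (val x ++ val y).
Proof.
rewrite /fg_mul val_insubd valid_reduce //.
by case: x y => [x /andP[_ x_r]] [y /andP[_ y_r]] /=; rewrite all_cat x_r y_r.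
Qed.

Lemma val_fg_gen r l : l.1 < r -> val (fg_gen r l) = [:: l].
Proof. by move=> l_r; rewrite /fg_gen val_insubd /valid /= l_r. Qed.

Lemma fg_eval_val r (x : FG r) : fg_eval r (val x) = x.
Proof.
apply: val_inj; case: x => w /=.
elim: w => //= l w IHw /andP[red_lw /andP[l_r w_r]].
have red_w := reducedb_behead red_lw.
rewrite val_fg_mul val_fg_gen //.
have -> : val (fg_eval r w) = w by apply: IHw; rewrite /valid red_w.
by rewrite reduce_id.
Qed.

Lemma fg_mul11 r : fg_mul (fg_one r) (fg_one r) = fg_one r.
Proof. by apply: val_inj; rewrite val_fg_mul. Qed.

Lemma fg_mulVgen r i : i < r ->
  fg_mul (fg_gen r (i, true)) (fg_gen r (i, false)) = fg_one r.
Proof. by move=> i_r; apply: val_inj; rewrite val_fg_mul !val_fg_gen //= eqxx. Qed.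

Section RankAtMostOne.
Local Open Scope ring_scope.

Fixpoint exponent_sum (w : seq letter) : int :=
  if w is l :: w' then (if l.2 then -1 else 1) + exponent_sum w' else 0.

Lemma exponent_sum_reduce w : exponent_sum (reduce w) = exponent_sum w.
Proof.
elim: w => //= l w <-; case: (reduce w) => [|l' w'] //=.
by case: ifP => [/eqP -> | _] //=; case: l => i [] /=; lia.
Qed.

Lemma exponent_sum_cat u v : exponent_sum (u ++ v) = exponent_sum u + exponent_sum v.
Proof. by elim: u => [|l u IHu] /=; rewrite ?add0r // IHu addrA. Qed.

Lemma exponent_sum_nseq n b :
  exponent_sum (nseq n (0%N, b)) = if b then - n%:Z else n%:Z.
Proof. by elim: n => [|n /= ->]; case: b => //; lia. Qed.

Lemma valid_rank_le1 r w : (r <= 1)%N -> valid r w ->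
  exists b, w = nseq (size w) (0%N, b).
Proof.
move=> r_le1; elim: w => [|[i c] w IHw]; first by exists false.
case/andP=> red_w /= /andP[i_r w_r].
have i0 : i = 0%N by lia.
subst i; exists c; congr (_ :: _).
have [b Ew] := IHw (introT andP (conj (reducedb_behead red_w) w_r)).
case: w Ew red_w {IHw w_r} => [//|l' w /= [El' Ew]].
rewrite El' /= /inv_letter /= => /andP[ne _].
have -> : c = b by case: b c ne {El' Ew} => [] [].
by rewrite {1}Ew.
Qed.

Lemma exponent_sum_inj r w1 w2 : (r <= 1)%N -> valid r w1 -> valid r w2 ->
  exponent_sum w1 = exponent_sum w2 -> w1 = w2.
Proof.
move=> r_le1 /(valid_rank_le1 r_le1)[b1 ->] /(valid_rank_le1 r_le1)[b2 ->].
rewrite !exponent_sum_nseq; set n1 := size w1; set n2 := size w2.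
case: b1; case: b2 => E.
- by have -> : n1 = n2 by lia.
- by have [-> ->] : n1 = 0%N /\ n2 = 0%N by lia.
- by have [-> ->] : n1 = 0%N /\ n2 = 0%N by lia.
- by have -> : n1 = n2 by lia.
Qed.

End RankAtMostOne.

Lemma fg_mulC_rank_le1 r : r <= 1 -> forall x y : FG r, fg_mul x y = fg_mul y x.
Proof.
move=> r_le1 x y; apply: val_inj; apply: (exponent_sum_inj r_le1); try exact: valP.
by rewrite !val_fg_mul !exponent_sum_reduce !exponent_sum_cat addrC.
Qed.

Lemma is_aut_id r : is_aut (@id (FG r)).
Proof. by split=> //; exists id. Qed.

Lemma is_aut_comp r (phi psi : FG r -> FG r) :
  is_aut phi -> is_aut psi -> is_aut (phi \o psi).
Proof.
case=> bij_phi phiM [bij_psi psiM]; split; first exact: bij_comp.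
by move=> x y /=; rewrite psiM phiM.
Qed.

Lemma is_aut_inv r (phi : FG r -> FG r) : is_aut phi ->
  exists2 psi, is_aut psi & cancel phi psi.
Proof.
case=> [[psi phiK psiK] phiM]; exists psi => //; split; first by exists phi.
by move=> x y; rewrite -{1}(psiK x) -{1}(psiK y) -phiM phiK.
Qed.

Lemma same_orbit_refl r (x : FG r) : same_orbit x x.
Proof. by exists id; split=> //; apply: is_aut_id. Qed.

Lemma same_orbit_sym r (x y : FG r) : same_orbit x y -> same_orbit y x.
Proof. by case=> phi [/is_aut_inv[psi aut_psi phiK] <-]; exists psi. Qed.

Lemma same_orbit_trans r (x y z : FG r) :
  same_orbit x y -> same_orbit y z -> same_orbit x z.
Proof.
case=> phi [aut_phi <-] [psi [aut_psi <-]].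
by exists (psi \o phi); split=> //; apply: is_aut_comp.
Qed.

Section AffineGroup.
Variable F : fieldType.
Local Open Scope ring_scope.

(* [(a, b)] is the affine map [x |-> a * x + b] and [aff_mul] is composition. *)
Definition aff := (F * F)%type.
Definition aff_mul (x y : aff) : aff := (x.1 * y.1, x.2 + x.1 * y.2).
Definition aff1 : aff := (1, 0).
Definition aff_inv (x : aff) : aff := (x.1^-1, - (x.1^-1 * x.2)).
Definition aff_comm (x y : aff) : aff :=
  aff_mul x (aff_mul y (aff_mul (aff_inv x) (aff_inv y))).

Lemma aff_mulA x y z : aff_mul x (aff_mul y z) = aff_mul (aff_mul x y) z.
Proof. by rewrite /aff_mul /=; congr pair; ring. Qed.

Lemma aff_mul1g x : aff_mul aff1 x = x.
Proof. by case: x => a b; rewrite /aff_mul /=; congr pair; ring. Qed.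

Lemma aff_mulg1 x : aff_mul x aff1 = x.
Proof. by case: x => a b; rewrite /aff_mul /=; congr pair; ring. Qed.

Lemma aff_mulgV x : x.1 != 0 -> aff_mul x (aff_inv x) = aff1.
Proof. by case: x => a b /= a0; rewrite /aff_mul /aff1 /=; congr pair; field. Qed.

Lemma aff_invK x : x.1 != 0 -> aff_inv (aff_inv x) = x.
Proof. by case: x => a b /= a0; rewrite /aff_inv /= invrK; congr pair; field. Qed.

Lemma aff_invM x y : x.1 != 0 -> y.1 != 0 ->
  aff_inv (aff_mul x y) = aff_mul (aff_inv y) (aff_inv x).
Proof.
case: x y => a b [c d] /= a0 c0; rewrite /aff_inv /aff_mul /=.
by congr pair; field; rewrite a0 c0.
Qed.

Lemma aff_mulgg_eq1 x : x.1 != 0 -> aff_mul x x = x -> x = aff1.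
Proof.
by move=> x0 xx; rewrite -[x]aff_mulg1 -(aff_mulgV x0) aff_mulA xx.
Qed.

Lemma aff_mul_eq1 x y : y.1 != 0 -> aff_mul x y = aff1 -> x = aff_inv y.
Proof. by move=> y0 xy; rewrite -[x]aff_mulg1 -(aff_mulgV y0) aff_mulA xy aff_mul1g. Qed.

Lemma aff_commE x y : x.1 != 0 -> y.1 != 0 ->
  aff_comm x y = (1, (1 - y.1) * x.2 + (x.1 - 1) * y.2).
Proof.
case: x y => a b [c d] /= a0 c0.
by rewrite /aff_comm /aff_mul /aff_inv /=; congr pair; field; rewrite a0 c0.
Qed.

Lemma aff_conj_translation x t : x.1 != 0 ->
  aff_mul x (aff_mul (1, t) (aff_inv x)) = (1, x.1 * t).
Proof. by case: x => a b /= a0; rewrite /aff_mul /aff_inv /=; congr pair; field. Qed.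

Definition letter_value (g : nat -> aff) (l : letter) : aff :=
  if l.2 then aff_inv (g l.1) else g l.1.

Definition word_value (g : nat -> aff) (w : seq letter) : aff :=
  foldr (fun l acc => aff_mul (letter_value g l) acc) aff1 w.

Definition fg_value r (g : nat -> aff) (x : FG r) : aff := word_value g (val x).

Definition invertible_gens (g : nat -> aff) := forall i, (g i).1 != 0.

Variable g : nat -> aff.
Hypothesis g_inv : invertible_gens g.

Lemma letter_value_unit l : (letter_value g l).1 != 0.
Proof. by rewrite /letter_value; case: l.2; rewrite ?invr_eq0 g_inv. Qed.

Lemma word_value_unit w : (word_value g w).1 != 0.
Proof. by elim: w => [|l w IHw] /=; rewrite ?oner_neq0 // mulf_neq0 ?letter_value_unit. Qed.

Lemma word_value_cat u v :
  word_value g (u ++ v) = aff_mul (word_value g u) (word_value g v).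
Proof. by elim: u => [|l u IHu] /=; rewrite ?aff_mul1g // IHu aff_mulA. Qed.

Lemma letter_value_inv l : letter_value g (inv_letter l) = aff_inv (letter_value g l).
Proof. by case: l => i [] //; rewrite /letter_value /= aff_invK. Qed.

Lemma word_value_cons_red l w :
  word_value g (cons_red l w) = aff_mul (letter_value g l) (word_value g w).
Proof.
case: w => [|l' w] //=; case: ifP => [/eqP -> | _] //=.
by rewrite letter_value_inv aff_mulA aff_mulgV ?letter_value_unit // aff_mul1g.
Qed.

Lemma word_value_reduce w : word_value g (reduce w) = word_value g w.
Proof. by elim: w => //= l w IHw; rewrite word_value_cons_red IHw. Qed.

Definition inv_word (w : seq letter) : seq letter := rev (map inv_letter w).

Lemma word_value_inv w : word_value g (inv_word w) = aff_inv (word_value g w).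
Proof.
elim: w => [|l w IHw]; first by rewrite /aff_inv /= invr1 mul1r oppr0.
rewrite /inv_word map_cons rev_cons -cats1 word_value_cat -/(inv_word w) IHw /=.
by rewrite aff_mulg1 letter_value_inv aff_invM ?letter_value_unit ?word_value_unit.
Qed.

Definition comm_word (u v : seq letter) : seq letter :=
  u ++ v ++ inv_word u ++ inv_word v.

Lemma word_value_comm u v :
  word_value g (comm_word u v) = aff_comm (word_value g u) (word_value g v).
Proof. by rewrite !word_value_cat !word_value_inv. Qed.

Lemma fg_value_mul r (x y : FG r) :
  fg_value g (fg_mul x y) = aff_mul (fg_value g x) (fg_value g y).
Proof. by rewrite /fg_value val_fg_mul word_value_reduce word_value_cat. Qed.

Lemma fg_value_eval r s : all (fun l => (l.1 < r)%N) s ->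
  fg_value g (fg_eval r s) = word_value g s.
Proof.
elim: s => [|l s IHs] //= /andP[l_r /IHs <-].
by rewrite fg_value_mul /fg_value val_fg_gen //= aff_mulg1.
Qed.

End AffineGroup.

Lemma fg_valueE (F : fieldType) r (e : FG r -> aff F) :
  (forall x y, e (fg_mul x y) = aff_mul (e x) (e y)) -> (forall x, (e x).1 != 0%R) ->
  e =1 fg_value (fun i => e (fg_gen r (i, false))).
Proof.
move=> eM e_inv x; rewrite -{1}(fg_eval_val x) /fg_value.
have e1 : e (fg_one r) = aff1 F by apply: aff_mulgg_eq1 => //; rewrite -eM fg_mul11.
case: x => w /= /andP[_]; elim: w => [|[i b] w IHw] //= /andP[i_r /IHw <-].
rewrite eM; congr aff_mul; case: b => //=; rewrite /letter_value /=.
by apply: aff_mul_eq1; rewrite // -eM fg_mulVgen.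
Qed.

Fixpoint bitval (s : seq bool) (a : nat) : nat :=
  if s is b :: s' then b + a * bitval s' a else 0.

Lemma bitval_rcons s b a : bitval (rcons s b) a = bitval s a + b * a ^ size s.
Proof. by elim: s => [|c s IHs] /=; rewrite ?muln0 ?expn0 ?muln1 ?addn0 // IHs expnS; lia. Qed.

Lemma bitval2_lt s : bitval s 2 < 2 ^ size s.
Proof. by elim: s => [|b s IHs] //=; rewrite expnS; case: b => /=; lia. Qed.

Lemma bitval2_inj s t : size s = size t -> bitval s 2 = bitval t 2 -> s = t.
Proof.
elim: s t => [|b s IHs] [|c t] //= [/IHs st] E.
by have [-> /st ->] : b = c /\ bitval s 2 = bitval t 2 by case: b c E => [] [] /=; lia.
Qed.

(* With [N := bitval s 2 < 2 ^ (size t).+1]: for [m = 1] the divisor is at least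
   [2 ^ size t], so the quotient is 1; for [m >= 2] it is at least [3 * 4 ^ size t > N]. *)
Lemma bitval_dvd_eq s t m : size s = (size t).+1 -> 0 < bitval s 2 -> 0 < m ->
  (2 ^ m - 1) * bitval (rcons t true) (2 ^ m) %| bitval s 2 -> s = rcons t true.
Proof.
move=> size_s N_gt0 m_gt0 dvd_N; set N := bitval s 2 in N_gt0 dvd_N.
have N_lt : N < 2 ^ (size t).+1 by rewrite -size_s; exact: bitval2_lt.
have T_ge : (2 ^ m) ^ size t <= bitval (rcons t true) (2 ^ m).
  by rewrite bitval_rcons mul1n leq_addl.
have X_le := dvdn_leq N_gt0 dvd_N.
case: m m_gt0 dvd_N X_le T_ge => [|[|m]] // _ dvd_N X_le T_ge.
  rewrite expn1 mul1n in dvd_N X_le T_ge.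
  case/dvdnP: dvd_N => q Eq; have q1 : q = 1 by rewrite expnS in N_lt; nia.
  by apply: bitval2_inj; rewrite ?size_rcons // -/N Eq q1 mul1n.
have h1 : 2 ^ (size t).*2 <= (2 ^ m.+2) ^ size t.
  by rewrite -expnM leq_pexp2l // -mul2n leq_mul2r ltnS ltn0Sn orbT.
have h2 : 2 ^ size t <= 2 ^ (size t).*2 by rewrite leq_pexp2l // -addnn leq_addr.
have h3 : 4 <= 2 ^ m.+2 by exact: (@leq_pexp2l 2 2 m.+2).
rewrite expnS in N_lt.
move: X_le N_lt h1 h2 h3 T_ge; set A := 2 ^ m.+2; set B := 2 ^ size t; nia.
Qed.

Section BitsPoly.
Variable R : comPzRingType.
Local Open Scope ring_scope.

Fixpoint bits_poly (s : seq bool) (x : R) : R :=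
  if s is b :: s' then b%:R + x * bits_poly s' x else 0.

Lemma bits_poly_nat s (a : nat) : bits_poly s a%:R = (bitval s a)%:R.
Proof. by elim: s => [|b s IHs] //=; rewrite IHs natrD natrM. Qed.

Lemma bits_poly_rcons s b (x : R) :
  bits_poly (rcons s b) x = bits_poly s x + b%:R * x ^+ size s.
Proof.
elim: s => [|c s IHs] /=; first by rewrite mulr0 expr0 add0r addr0 mulr1.
by rewrite IHs exprS; ring.
Qed.

End BitsPoly.

Section BitsPolyField.
Variable F : fieldType.
Local Open Scope ring_scope.

Lemma bits_poly_rev s (x : F) : x != 0 ->
  x ^+ size s * bits_poly s x^-1 = x * bits_poly (rev s) x.
Proof.
move=> x0; elim: s => [|b s IHs] /=; first by rewrite !mulr0.
have IHs' : bits_poly (rev s) x = x^-1 * (x ^+ size s * bits_poly s x^-1).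
  by rewrite IHs; field.
by rewrite rev_cons bits_poly_rcons size_rev IHs' exprS; field.
Qed.

End BitsPolyField.

Definition gen_a : letter := (0, false).
Definition gen_b : letter := (1, false).

Fixpoint horner_word (s : seq bool) : seq letter :=
  if s is c :: s' then
    (if c then comm_word [:: gen_a] [:: gen_b] else [::])
      ++ gen_a :: horner_word s' ++ [:: inv_letter gen_a]
  else [::].

Definition horner_comm_word (s : seq bool) : seq letter :=
  comm_word [:: gen_a] (horner_word s).

Lemma size_inv_word w : size (inv_word w) = size w.
Proof. by rewrite size_rev size_map. Qed.

Lemma size_horner_word s : size (horner_word s) <= 6 * size s.
Proof. by elim: s => [|c s IHs] //=; rewrite !size_cat /= size_cat /=; case: c => /=; lia. Qed.

Lemma size_horner_comm_word s : size (horner_comm_word s) <= 12 * size s + 2.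
Proof.
rewrite /horner_comm_word /comm_word !size_cat !size_inv_word /=.
by have := size_horner_word s; lia.
Qed.

Lemma all_inv_word r w : all (fun l => l.1 < r) (inv_word w) = all (fun l => l.1 < r) w.
Proof. by rewrite all_rev all_map. Qed.

Lemma horner_comm_word_letters r s : 2 <= r -> all (fun l => l.1 < r) (horner_comm_word s).
Proof.
move=> r_ge2; apply: (@sub_all _ (fun l : letter => l.1 < 2)).
  by move=> l /leq_trans; apply.
have hw : all (fun l => l.1 < 2) (horner_word s).
  by elim: s => [|[] s IHs] //=; rewrite !all_cat /= IHs.
by rewrite /horner_comm_word /comm_word !all_cat hw !all_inv_word.
Qed.

Section HornerValue.
Variable F : fieldType.
Variable g : nat -> aff F.
Hypothesis g_inv : invertible_gens g.
Local Open Scope ring_scope.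
Local Notation alpha := (g 0%N).1.
Variable tau : F.
Hypothesis comm_ab : aff_comm (g 0%N) (g 1%N) = (1, tau).

Lemma word_value_horner s : word_value g (horner_word s) = (1, bits_poly s alpha * tau).
Proof.
elim: s => [|c s IHs] /=; first by rewrite mul0r.
rewrite word_value_cat /= word_value_cat IHs /= aff_mulg1 (letter_value_inv g_inv).
rewrite [letter_value g gen_a]/letter_value /= aff_conj_translation //.
case: c; rewrite ?(word_value_comm g_inv) /= ?aff_mulg1 /letter_value /= ?comm_ab /aff_mul /=.
all: by congr pair; ring.
Qed.

Lemma word_value_horner_comm s :
  word_value g (horner_comm_word s) = (1, (alpha - 1) * bits_poly s alpha * tau).
Proof.
rewrite (word_value_comm g_inv) word_value_horner.
rewrite aff_commE ?(word_value_unit g_inv) ?oner_neq0 //=.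
by rewrite /letter_value /=; congr pair; ring.
Qed.

End HornerValue.

Section DyadicAffine.
Local Open Scope ring_scope.

Definition pow2 (a : rat) := exists k : int, a = 2%:R ^ k.
Definition dyadic (b : rat) := exists (M : nat) (z : int), b * 2%:R ^+ M = z%:~R.
Definition dyadic_aff (x : aff rat) := pow2 x.1 /\ dyadic x.2.

Lemma pow2_neq0 a : pow2 a -> a != 0.
Proof. by case=> k ->; apply: expfz_neq0. Qed.

Lemma pow2M a b : pow2 a -> pow2 b -> pow2 (a * b).
Proof. by case=> k -> [l ->]; exists (k + l); rewrite expfzDr. Qed.

Lemma pow2V a : pow2 a -> pow2 a^-1.
Proof. by case=> k ->; exists (- k); rewrite invr_expz. Qed.

Lemma dyadicD a b : dyadic a -> dyadic b -> dyadic (a + b).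
Proof.
case=> M [z Ez] [N [w Ew]]; exists (M + N)%N, (z * 2 ^+ N + w * 2 ^+ M).
by rewrite intrD !intrM exprD mulrDl -Ez -Ew !rmorphXn /=; ring.
Qed.

Lemma dyadicM a b : dyadic a -> dyadic b -> dyadic (a * b).
Proof.
case=> M [z Ez] [N [w Ew]]; exists (M + N)%N, (z * w).
by rewrite intrM exprD -Ez -Ew; ring.
Qed.

Lemma dyadicN a : dyadic a -> dyadic (- a).
Proof. by case=> M [z Ez]; exists M, (- z); rewrite mulNr Ez intrN. Qed.

Lemma dyadic_pow2 a : pow2 a -> dyadic a.
Proof.
case=> [[m|m] ->]; first by exists 0%N, (2 ^+ m); rewrite mulr1 -exprnP rmorphXn.
exists m.+1, 1; rewrite NegzE -invr_expz -exprnP mulVf //.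
by rewrite expf_neq0.
Qed.

Lemma dyadic_aff_mul x y : dyadic_aff x -> dyadic_aff y -> dyadic_aff (aff_mul x y).
Proof.
case=> [x1 x2] [y1 y2]; split; first exact: pow2M.
by apply: dyadicD => //; apply: dyadicM => //; apply: dyadic_pow2.
Qed.

Lemma dyadic_aff_inv x : dyadic_aff x -> dyadic_aff (aff_inv x).
Proof.
case=> [x1 x2]; split; first exact: pow2V.
by apply/dyadicN/dyadicM => //; apply/dyadic_pow2/pow2V.
Qed.

Lemma dyadic_aff1 : dyadic_aff (aff1 rat).
Proof. by split; [exists 0 | exists 0%N, 0; rewrite mul0r]. Qed.

Definition dyadic_gens (g : nat -> aff rat) := forall i, dyadic_aff (g i).

Lemma dyadic_gens_inv g : dyadic_gens g -> invertible_gens g.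
Proof. by move=> g_dy i; case: (g_dy i) => /pow2_neq0. Qed.

Lemma word_value_dyadic g w : dyadic_gens g -> dyadic_aff (word_value g w).
Proof.
move=> g_dy; elim: w => [|l w IHw] /=; first exact: dyadic_aff1.
apply: dyadic_aff_mul => //; rewrite /letter_value; case: ifP => _ //.
exact: dyadic_aff_inv.
Qed.

Definition dyadic_value r (x : FG r) (c : aff rat) :=
  exists2 g, dyadic_gens g & fg_value g x = c.

Lemma dyadic_value_aut r (phi : FG r -> FG r) x c :
  is_aut phi -> dyadic_value (phi x) c -> dyadic_value x c.
Proof.
case=> _ phiM [g g_dy <-]; set e := fun y => fg_value g (phi y).
have eM y z : e (fg_mul y z) = aff_mul (e y) (e z).
  by rewrite /e phiM (fg_value_mul (dyadic_gens_inv g_dy)).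
have e_inv y : (e y).1 != 0 by case: (word_value_dyadic (val (phi y)) g_dy) => /pow2_neq0.
exists (fun i => e (fg_gen r (i, false))); first by move=> i; apply: word_value_dyadic.
by rewrite -fg_valueE.
Qed.

Lemma dyadic_value_orbit r (x y : FG r) c :
  same_orbit x y -> dyadic_value x c -> dyadic_value y c.
Proof. by case/same_orbit_sym=> phi [aut_phi <-]; apply: dyadic_value_aut. Qed.

Lemma intr_dvdn (X P : nat) (z : int) (sg : bool) :
  X%:R * z%:~R = (-1) ^+ sg * P%:R :> rat -> (X %| P)%N.
Proof.
move=> E; have /intr_inj : (X%:Z * z)%:~R = ((-1) ^+ sg * P%:Z)%:~R :> rat.
  by rewrite !intrM rmorphXn rmorphN rmorph1 -!pmulrn.
by move/(congr1 absz); rewrite abszM abszMsign /= => <-; apply: dvdn_mulr.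
Qed.

(* For [alpha = 2^-m], palindromy gives
   [bits_poly t alpha = 2 ^ (m * (1 - size t)) * bits_poly t (2^m)] (see [bits_poly_rev]). *)
Lemma dyadic_bits_dvd t (N : nat) alpha tau :
  rev t = t -> pow2 alpha -> dyadic tau -> (0 < N)%N ->
  (alpha - 1) * bits_poly t alpha * tau = N%:R ->
  exists m K, (0 < m)%N /\ ((2 ^ m - 1) * bitval t (2 ^ m) %| N * 2 ^ K)%N.
Proof.
move=> t_pal [[[|m]|m] ->] [M [z Ez]] N_gt0 E.
- by move: E; rewrite expr0z subrr !mul0r => /eqP; rewrite eq_sym pnatr_eq0 gtn_eqF.
- exists m.+1, M; split=> //; apply: (@intr_dvdn _ _ z false).
  rewrite expr0 mul1r natrM natrB ?expn_gt0 // natrX -bits_poly_nat natrX -Ez.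
  by rewrite natrM natrX -E -exprnP; ring.
set x : rat := 2%:R ^+ m.+1.
have x_neq0 : x != 0 by rewrite expf_neq0.
have pal := bits_poly_rev t x_neq0; rewrite t_pal in pal.
rewrite NegzE -invr_expz -exprnP -/x in E.
have E2 : (x - 1) * bits_poly t x * tau = - (N%:R * x ^+ size t).
  rewrite -E; have -> : bits_poly t x = x ^+ size t * bits_poly t x^-1 / x by rewrite pal; field.
  by field.
exists m.+1, (m.+1 * size t + M)%N; split=> //; apply: (@intr_dvdn _ _ z true).
rewrite expr1 natrM natrB ?expn_gt0 // natrX -bits_poly_nat natrX -Ez -/x.
by rewrite natrM natrX exprD exprM -/x [_ * (tau * _)]mulrA E2; ring.
Qed.

End DyadicAffine.

Definition mirror (u : seq bool) : seq bool := rcons (true :: u ++ rev u) true.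

Lemma rev_mirror u : rev (mirror u) = mirror u.
Proof. by rewrite /mirror rev_rcons rev_cons rev_cat revK rcons_cons. Qed.

Lemma size_mirror u : size (mirror u) = (size u).*2.+2.
Proof. by rewrite /mirror size_rcons /= size_cat size_rev addnn. Qed.

Lemma mirror_inj u v : size u = size v -> mirror u = mirror v -> u = v.
Proof.
move=> size_uv /rcons_inj[] /eqP.
by rewrite eqseq_cat // => /andP[/eqP].
Qed.

Definition fg_mirror r (u : seq bool) : FG r := fg_eval r (horner_comm_word (mirror u)).

Section BinaryValue.
Local Open Scope ring_scope.

Definition binary_gens (i : nat) : aff rat :=
  if i == 0%N then (2%:R, 0) else if i == 1%N then (1, 1) else (1, 0).

Lemma binary_gens_dyadic : dyadic_gens binary_gens.
Proof.
have dy0 : dyadic 0 by exists 0%N, 0; rewrite mul0r.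
have dy1 : dyadic 1 by exists 0%N, 1; rewrite mul1r.
by move=> [|[|i]]; split=> //=; [exists 1 | exists 0 | exists 0].
Qed.

Lemma dyadic_value_bits r s : (2 <= r)%N ->
  dyadic_value (fg_eval r (horner_comm_word s)) (1, (bitval s 2)%:R).
Proof.
move=> r_ge2; have g_inv := dyadic_gens_inv binary_gens_dyadic.
exists binary_gens; first exact: binary_gens_dyadic.
rewrite fg_value_eval ?horner_comm_word_letters //.
rewrite (word_value_horner_comm g_inv (tau := 1)); last first.
  by rewrite aff_commE ?g_inv //= /binary_gens /=; congr pair; ring.
by rewrite -bits_poly_nat /binary_gens /=; congr pair; ring.
Qed.

Lemma dyadic_value_mirror r u v : (2 <= r)%N -> size u = size v ->
  dyadic_value (fg_mirror r v) (1, (bitval (mirror u) 2)%:R) -> u = v.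
Proof.
move=> r_ge2 size_uv [g g_dy]; have g_inv := dyadic_gens_inv g_dy.
have [alpha_pow2 _] := g_dy 0%N.
set tau := (aff_comm (g 0%N) (g 1%N)).2.
have tau_dy : dyadic tau.
  have := word_value_dyadic (comm_word [:: gen_a] [:: gen_b]) g_dy.
  by rewrite (word_value_comm g_inv) /= !aff_mulg1 => -[].
have comm_ab : aff_comm (g 0%N) (g 1%N) = (1, tau) by rewrite /tau aff_commE ?g_inv.
rewrite /fg_mirror fg_value_eval ?horner_comm_word_letters //.
rewrite (word_value_horner_comm g_inv comm_ab) => -[E].
have N_gt0 : (0 < bitval (mirror u) 2)%N by rewrite /mirror rcons_cons.
have [m [K [m_gt0 dvd_NK]]] := dyadic_bits_dvd (rev_mirror v) alpha_pow2 tau_dy N_gt0 E.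
have two_m_even : ~~ odd (2 ^ m) by rewrite oddX negb_and lt0n_neq0.
have X_odd : odd ((2 ^ m - 1) * bitval (mirror v) (2 ^ m)).
  rewrite oddM oddB ?expn_gt0 // [mirror v]/mirror rcons_cons /=.
  by rewrite oddD oddM (negbTE two_m_even).
rewrite Gauss_dvdl ?coprimeXr ?coprimen2 // in dvd_NK.
apply: mirror_inj => //; move: dvd_NK; rewrite [mirror v]/mirror; apply: bitval_dvd_eq => //.
by rewrite size_mirror /= size_cat size_rev size_uv addnn.
Qed.

End BinaryValue.

Lemma fg_mirror_orbit_inj r u v : 2 <= r -> size u = size v ->
  same_orbit (fg_mirror r u) (fg_mirror r v) -> u = v.
Proof.
move=> r_ge2 size_uv /dyadic_value_orbit orbit_uv.
exact/(dyadic_value_mirror r_ge2 size_uv)/orbit_uv/dyadic_value_bits.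
Qed.

Definition letters r : seq letter := [seq (i, b) | i <- iota 0 r, b <- [:: false; true]].

Fixpoint words r n : seq (seq letter) :=
  if n is n'.+1 then [::] :: [seq l :: w | l <- letters r, w <- words r n'] else [:: [::]].

Lemma mem_words r n s : (s \in words r n) = (size s <= n) && all (fun l => l.1 < r) s.
Proof.
elim: n s => [|n IHn] [|l s] //=; rewrite in_cons /=.
apply/allpairsP/andP => [[[l' w] /= [l'_in w_in [-> ->]]]|[s_n /andP[l_r s_r]]].
  move: w_in; rewrite IHn => /andP[w_n ->]; split=> //; rewrite andbT.
  by case/allpairsP: l'_in => [[i b] /= [i_in _ ->]]; move: i_in; rewrite mem_iota.
exists (l, s); split=> //=; last by rewrite IHn -ltnS s_n.
by case: l l_r => i b i_r; apply/allpairsP; exists (i, b); rewrite /= mem_iota i_r; case: b {i_r}.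
Qed.

Lemma size_words r n : size (words r n) <= r.*2.+1 ^ n.
Proof.
elim: n => [|n IHn] //=; rewrite size_allpairs /letters size_allpairs size_iota /= expnS.
by move: IHn; set A := _ ^ n; set B := size _; nia.
Qed.

Definition ball r n : seq (FG r) := map (fg_eval r) (words r n).

Lemma mem_ball r n x : in_ball n x <-> x \in ball r n.
Proof.
split=> [[s [s_n [s_r <-]]]|/mapP[s]]; first by rewrite map_f // mem_words s_n.
by rewrite mem_words => /andP[s_n s_r] ->; exists s.
Qed.

Fixpoint orbit_reps r (B : seq (FG r)) : seq (FG r) :=
  if B is x :: B' then
    let L := orbit_reps B' in
    if excluded_middle_informative (exists2 y, y \in L & same_orbit x y) then L else x :: L
  else [::].

Lemma orbit_reps_sub r (B : seq (FG r)) : {subset orbit_reps B <= B}.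
Proof.
elim: B => [|x B IHB] //= y; case: excluded_middle_informative => covered.
  by move/IHB; rewrite in_cons orbC => ->.
by rewrite !in_cons => /orP[-> //|/IHB ->]; rewrite orbT.
Qed.

Lemma orbit_reps_cover r (B : seq (FG r)) x :
  x \in B -> exists2 y, y \in orbit_reps B & same_orbit x y.
Proof.
elim: B => [|z B IHB] //=; case: excluded_middle_informative => [covered|fresh].
  by rewrite in_cons => /orP[/eqP -> //|/IHB].
rewrite in_cons => /orP[/eqP ->|/IHB[y y_in xy]].
  by exists z; [rewrite in_cons eqxx | apply: same_orbit_refl].
by exists y; rewrite // in_cons y_in orbT.
Qed.

Lemma orbit_reps_sep r (B : seq (FG r)) i j : i < j < size (orbit_reps B) ->
  ~ same_orbit (nth (fg_one r) (orbit_reps B) i) (nth (fg_one r) (orbit_reps B) j).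
Proof.
elim: B i j => [|x B IHB] i j /=; first by rewrite ltn0 andbF.
case: excluded_middle_informative => [covered|fresh]; first exact: IHB.
case: i j => [|i] [|j] //= ij; last exact: IHB.
by apply: contra_not fresh => xy; exists (nth (fg_one r) (orbit_reps B) j); rewrite ?mem_nth.
Qed.

Lemma orbit_count_orbit_reps r n : orbit_count r n (size (orbit_reps (ball r n))).
Proof.
exists (orbit_reps (ball r n)); split=> //.
- by move=> x /orbit_reps_sub/mem_ball.
- exact: orbit_reps_sep.
- by move=> x /mem_ball/orbit_reps_cover.
Qed.

Lemma orbit_count_ub r n k : orbit_count r n k -> k <= 2 ^ (r.*2.+1 * n).
Proof.
case=> L [<- L_ball L_sep _].
have L_uniq : uniq L.
  apply/(uniqP (fg_one r)) => i j; rewrite !inE => i_L j_L Lij.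
  case: (ltngtP i j) => // [ij|ji]; exfalso.
    by apply: (L_sep i j); rewrite ?ij ?Lij //; apply: same_orbit_refl.
  by apply: (L_sep j i); rewrite ?ji ?Lij //; apply: same_orbit_refl.
have card_L : size L <= r.*2.+1 ^ n.
  apply: leq_trans (size_words r n); rewrite -(size_map (fg_eval r)).
  by apply: uniq_leq_size => // x /L_ball/mem_ball.
apply: leq_trans card_L _; rewrite expnM.
by case: (posnP n) => [-> //|n_gt0]; rewrite leq_exp2r // ltnW // ltn_expl.
Qed.

Lemma orbit_count_lb r n k : 2 <= r -> orbit_count r (26 * n + 26) k -> 2 ^ n <= k.
Proof.
move=> r_ge2 [L [<- _ _ L_cover]].
have mirror_ball (u : n.-tuple bool) : in_ball (26 * n + 26) (fg_mirror r (val u)).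
  exists (horner_comm_word (mirror u)); rewrite horner_comm_word_letters //.
  by split=> //; apply: leq_trans (size_horner_comm_word _) _; rewrite size_mirror size_tuple; lia.
have rep (u : n.-tuple bool) : {y | y \in L /\ same_orbit (fg_mirror r (val u)) y}.
  apply: constructive_indefinite_description.
  by have [y y_L uy] := L_cover _ (mirror_ball u); exists y.
have rep_inj : injective (fun u => sval (rep u)).
  move=> u v repuv; have [_ uy] := svalP (rep u); have [_ vy] := svalP (rep v).
  apply/val_inj/(fg_mirror_orbit_inj r_ge2); rewrite ?size_tuple //.
  by apply: same_orbit_trans uy _; rewrite repuv; apply: same_orbit_sym.
rewrite -card_bool -card_tuple cardE -(size_map (fun u => sval (rep u))).
apply: uniq_leq_size; first by rewrite map_inj_uniq ?enum_uniq.
by move=> y /mapP[u _ ->]; case: (svalP (rep u)).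
Qed.

Theorem mainTheorem4 (r : nat) :
  ~ (forall x y : FG r, fg_mul x y = fg_mul y x) -> exp_aut_growth r.
Proof.
move=> nonabelian.
have r_ge2 : 2 <= r by rewrite ltnNge; apply/negP => /fg_mulC_rank_le1/nonabelian.
split; first by exists (fun n => size (orbit_reps (ball r n))) => n; apply: orbit_count_orbit_reps.
move=> f count_f; split.
- exists r.*2.+1; split=> // n; apply: leq_trans (orbit_count_ub (count_f n)) _.
  have : 2 ^ (r.*2.+1 * n) <= 2 ^ (r.*2.+1 * n + r.*2.+1) by rewrite leq_pexp2l ?leq_addr.
  by set A := 2 ^ _; set B := 2 ^ _; nia.
- exists 26; split=> // n; have := orbit_count_lb r_ge2 (count_f (26 * n + 26)); lia.
Qed.
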